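(* Let $k$ be odd and $m$ a positive integer. For $i=1,\dots,k$ let $A_i=(a_{i,1},a_{i,2},\dots,a_{i,m})$ be a sequence with entries from a two-element set of symbols, and let $P=(a_{1,1},a_{2,1},\dots,a_{k,1},a_{1,2},a_{2,2},\dots,a_{k,2},\dots,a_{1,m},\dots,a_{k,m})$. Then $f(P)\le (k-1)m+\min\{f(A_i):1\le i\le k\}$.
   Context: For a finite sequence $X=(x_1,\dots,x_M)$ of symbols from a two-element set, $f(X)=|\{i\in\{1,\dots,M\}: x_i\ne x_{i+1}\}|$, where $x_{M+1}=x_1$ (i.e. the number of cyclic changes of symbol). *)

From mathcomp Require Import all_boot.
Set Implicit Arguments. Unset Strict Implicit. Unset Printing Implicit Defensive.

(* Symbols from a two-element set are modeled by bool. *)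
(* f(X): number of cyclic changes of symbol, indices taken modulo M = size X. *)
Definition cyc_changes (X : seq bool) : nat :=
  \sum_(i < size X) (nth false X i != nth false X ((i.+1) %% size X)).

(* The sequence A_i = (a_{i,1},...,a_{i,m}) as a list (0-indexed). *)
Definition row_seq (m : nat) (a : nat -> nat -> bool) (i : nat) : seq bool :=
  [seq a i j | j <- iota 0 m].

Definition interleave (k m : nat) (a : nat -> nat -> bool) : seq bool :=
  flatten [seq [seq a i j | i <- iota 0 k] | j <- iota 0 m].

Definition seqmin (s : seq nat) : nat := foldr minn (head 0 s) s.

(** Read P cyclically, starting at the entry a_{r,1} of a fixed row r, and cut
    it into the m blocks of k consecutive steps from a_{r,j} to a_{r,j+1}.
    Along a path of odd length k the number of changes has the parity of
    [first != last], so it is at most k - 1 when the endpoints agree and at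
    most k otherwise.  Summing over the blocks bounds f(P) by
    (k - 1) m + f(A_r), for every r. *)

From mathcomp Require Import all_boot zify.

Set Implicit Arguments.
Unset Strict Implicit.
Unset Printing Implicit Defensive.

Section PathChanges.

Variable g : nat -> bool.

Lemma odd_sum_changes n :
  odd (\sum_(0 <= t < n) (g t != g t.+1)) = (g 0 != g n).
Proof.
elim: n => [|n IHn]; first by rewrite big_nil; case: (g 0).
rewrite big_nat_recr //= oddD IHn.
by case: (g 0); case: (g n); case: (g n.+1).
Qed.

Lemma sum_changes_odd_le n : odd n ->
  \sum_(0 <= t < n) (g t != g t.+1) <= n.-1 + (g 0 != g n).
Proof.
move=> odd_n.
have le_n : \sum_(0 <= t < n) (g t != g t.+1) <= n.
  rewrite -[n in _ <= n]muln1 -[n in n * 1]subn0 -sum_nat_const_nat.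
  by apply: leq_sum => t _; apply: leq_b1.
have := odd_sum_changes n.
case: (g 0 != g n) => /= odd_sum; first lia.
have : \sum_(0 <= t < n) (g t != g t.+1) != n.
  by apply/eqP => sum_n; rewrite sum_n odd_n in odd_sum.
lia.
Qed.

End PathChanges.

Lemma sum_periodic_shift (h : nat -> nat) N r :
  (forall p, h (p + N) = h p) ->
  \sum_(0 <= p < N) h (r + p) = \sum_(0 <= p < N) h p.
Proof.
move=> hN; elim: r => [|r IHr]; first by under eq_bigr do rewrite add0n.
rewrite -IHr; apply/eqP; rewrite -(eqn_add2l (h r)).
have := @big_nat_recr nat 0 addn N 0 (fun p => h (r + p)) (leq0n N).
rewrite big_nat_recl // addn0 hN [RHS]addnC => <-.
by under eq_bigr do rewrite addSnnS.
Qed.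

Lemma cyc_changes_periodic (s : seq bool) (g : nat -> bool) :
  (forall p, g p = nth false s (p %% size s)) ->
  cyc_changes s = \sum_(0 <= p < size s) (g p != g p.+1).
Proof.
move=> gE; rewrite /cyc_changes big_mkord.
by apply: eq_bigr => -[p lt_p] _; rewrite !gE (modn_small lt_p).
Qed.

Lemma cyc_changes_row m a r : 0 < m ->
  cyc_changes (row_seq m a r) =
    \sum_(0 <= j < m) (a r (j %% m) != a r (j.+1 %% m)).
Proof.
move=> m_gt0.
have row_size : size (row_seq m a r) = m by rewrite size_map size_iota.
rewrite (@cyc_changes_periodic _ (fun j => a r (j %% m))) row_size // => j.
by rewrite (nth_map 0) ?size_iota ?nth_iota ?ltn_pmod.
Qed.

Lemma interleaveE k m a :
  interleave k m a = mkseq (fun p => a (p %% k) (p %/ k)) (m * k).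
Proof.
have [->|k_gt0] := posnP k.
  by rewrite muln0 /interleave; elim: (iota 0 m).
elim: m => [//|m IHm]; rewrite /interleave in IHm *.
rewrite -addn1 iotaD map_cat flatten_cat IHm /mkseq mulnDl mul1n iotaD map_cat.
congr (_ ++ _); rewrite /= cats0 !add0n -{1}[m * k]addn0 iotaDl -map_comp.
apply/eq_in_map => i; rewrite mem_iota => /andP[_ lt_i] /=.
by rewrite modnMDl modn_small // divnMDl // divn_small // addn0.
Qed.

Definition interleave_fun k m (a : nat -> nat -> bool) (p : nat) : bool :=
  a (p %% k) (p %/ k %% m).

Section Interleave.

Variables (k m : nat) (a : nat -> nat -> bool).
Hypotheses (k_gt0 : 0 < k) (m_gt0 : 0 < m).

Lemma size_interleave : size (interleave k m a) = m * k.
Proof. by rewrite interleaveE size_mkseq. Qed.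

Lemma interleave_funE p :
  interleave_fun k m a p =
    nth false (interleave k m a) (p %% size (interleave k m a)).
Proof.
rewrite size_interleave interleaveE.
rewrite nth_mkseq ?ltn_pmod ?muln_gt0 ?k_gt0 ?m_gt0 //.
by rewrite modn_dvdm ?dvdn_mull // divn_modl ?dvdn_mull // mulnK.
Qed.

Lemma interleave_fun_periodic p :
  interleave_fun k m a (p + m * k) = interleave_fun k m a p.
Proof. by rewrite /interleave_fun addnC modnMDl addnC divnDMl // modnDr. Qed.

End Interleave.

Lemma interleave_fun_block k m a j r : r < k ->
  interleave_fun k m a (j * k + r) = a r (j %% m).
Proof.
move=> lt_rk; have k_gt0 : 0 < k by case: k lt_rk.
by rewrite /interleave_fun modnMDl modn_small // divnMDl // divn_small ?addn0.
Qed.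

Lemma cyc_changes_interleave_le_row k m a r : odd k -> 0 < m -> r < k ->
  cyc_changes (interleave k m a) <= k.-1 * m + cyc_changes (row_seq m a r).
Proof.
move=> odd_k m_gt0 lt_rk; have k_gt0 : 0 < k by case: k odd_k lt_rk.
set G := interleave_fun k m a.
rewrite (cyc_changes_periodic (interleave_funE a k_gt0 m_gt0)).
rewrite size_interleave //.
rewrite -(sum_periodic_shift r (h := fun p => G p != G p.+1)); last first.
  by move=> p; rewrite /G -addSn !interleave_fun_periodic.
rewrite big_nat_mul cyc_changes_row // mulnC -[m in m * _]subn0.
rewrite -sum_nat_const_nat -big_split /=; apply: leq_sum => j _.
rewrite -[j * k]add0n big_addn mulSn addnK.
have -> : \sum_(0 <= p < k) (G (r + (p + j * k)) != G (r + (p + j * k)).+1) =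
          \sum_(0 <= p < k) (G (j * k + r + p) != G (j * k + r + p.+1)).
  by apply: eq_bigr => p _; congr (G _ != G _); lia.
apply: leq_trans (sum_changes_odd_le (fun t => G (j * k + r + t)) odd_k) _.
by rewrite addn0 -addnA (addnC r) addnA -mulSnr /G !interleave_fun_block.
Qed.

Lemma foldr_minn_mem x (s : seq nat) : foldr minn x s \in x :: s.
Proof.
elim: s => [|y s IHs] /=; first exact: mem_head.
rewrite /minn; case: ifP => _; first by rewrite !inE eqxx orbT.
by move: IHs; rewrite !inE => /orP[->|->]; rewrite ?orbT.
Qed.

Lemma seqmin_mem s : s != [::] -> seqmin s \in s.
Proof.
case: s => [//|x s] _; rewrite /seqmin [head _ _]/=.
by have /predU1P[->|] := foldr_minn_mem x (x :: s); rewrite ?mem_head.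
Qed.

Theorem lemma5p4 (k m : nat) (a : nat -> nat -> bool) :
  odd k -> 0 < m ->
  cyc_changes (interleave k m a) <=
    (k - 1) * m + seqmin [seq cyc_changes (row_seq m a i) | i <- iota 0 k].
Proof.
move=> odd_k m_gt0.
have /mapP[r] : seqmin [seq cyc_changes (row_seq m a i) | i <- iota 0 k] \in
                [seq cyc_changes (row_seq m a i) | i <- iota 0 k].
  by apply: seqmin_mem; rewrite -size_eq0 size_map size_iota; case: k odd_k.
rewrite mem_iota add0n => /andP[_ lt_rk] ->.
by rewrite subn1; apply: cyc_changes_interleave_le_row.
Qed.
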